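(* In the 1SDI setting where Alice measures $A_0=\sigma_x$, $A_1=\sigma_y$, Bob measures $B_0=(\sigma_x-\sigma_y)/\sqrt2$, $B_1=(\sigma_x+\sigma_y)/\sqrt2$, and Charlie is a black box, the Svetlichny family $P^V_{SvF}$ ($0<V\le1$) demonstrates genuine tripartite steering (i.e. admits no 1SDI steering LHS-LHV model) if and only if $V>\frac1{\sqrt2}$.
   Context: Outcomes and settings: $a,b,c,x,y,z\in\{0,1\}$. For a qubit observable $O$ with eigenvalues $\pm1$, the measurement has projectors $M_0=(\mathbb 1+O)/2$, $M_1=(\mathbb 1-O)/2$; $M^A_{a|x}$, $M^B_{b|y}$ denote the projectors of $A_x$, $B_y$. Svetlichny family: $P^V_{SvF}(abc|xyz)=\frac{2+(-1)^{a\oplus b\oplus c\oplus xy\oplus yz\oplus xz}\sqrt2\,V}{16}$. 1SDI steering LHS-LHV (StLHS) model: $P(abc|xyz)=\sum_\lambda r_\lambda \mathrm{Tr}[(M^A_{a|x}\otimes M^B_{b|y})\rho^\lambda_{AB}]P_\lambda(c|z)+\sum_\lambda p_\lambda \mathrm{Tr}(M^A_{a|x}\rho^\lambda_A)P^Q_\lambda(bc|yz)+\sum_\lambda q_\lambda \mathrm{Tr}(M^B_{b|y}\rho^\lambda_B)P^Q_\lambda(ac|xz)$, with nonnegative weights summing to 1, $\rho^\lambda_{AB}$ two-qubit states, $\rho^\lambda_A,\rho^\lambda_B$ qubit states, $P_\lambda(c|z)$ arbitrary conditional distributions, and $P^Q_\lambda(bc|yz)=\mathrm{Tr}[(M^B_{b|y}\otimes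 N^\lambda_{c|z})\tau^\lambda_{BC}]$, $P^Q_\lambda(ac|xz)=\mathrm{Tr}[(M^A_{a|x}\otimes N^\lambda_{c|z})\tau^\lambda_{AC}]$ for some states $\tau^\lambda$ on $\mathbb C^2\otimes\mathbb C^d$ and POVMs $\{N^\lambda_{c|z}\}_c$ on $\mathbb C^d$. A correlation demonstrates genuine tripartite steering in the 1SDI scenario iff it admits no StLHS model. *)

(* Complex numbers: an arbitrary numClosedFieldType C
   (e.g. algC). *)
From HB Require Import structures.
From mathcomp Require Import all_boot all_order all_algebra.
Set Implicit Arguments. Unset Strict Implicit. Unset Printing Implicit Defensive.
Import Order.TTheory GRing.Theory Num.Theory.
Local Open Scope ring_scope.

Section QDefs.
Variable C : numClosedFieldType.

Definition adj m n (A : 'M[C]_(m, n)) : 'M[C]_(n, m) := map_mx Num.conj A^T.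

Definition psd n (A : 'M[C]_n) : Prop :=
  adj A = A /\ forall v : 'rV[C]_n, 0 <= (v *m A *m adj v) 0 0.

Definition is_state n (rho : 'M[C]_n) : Prop := psd rho /\ \tr rho = 1.

(* POVM with outcomes c : bool, for each setting z : bool *)
Definition is_povm d (N : bool -> bool -> 'M[C]_d) : Prop :=
  (forall c z, psd (N c z)) /\ (forall z, N false z + N true z = 1%:M).

(* index of C^m (x) C^n, identified with pairs (i, j) *)
Definition pair_idx m n (k : 'I_(m * n)) : 'I_m * 'I_n :=
  enum_val (cast_ord (esym (mxvec_cast m n)) k).

Definition kron m n (A : 'M[C]_m) (B : 'M[C]_n) : 'M[C]_(m * n) :=
  \matrix_(k < m * n, l < m * n) (A (pair_idx k).1 (pair_idx l).1 * B (pair_idx k).2 (pair_idx l).2).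

Definition sx : 'M[C]_2 := \matrix_(i < 2, j < 2) (if i == j then 0 else 1).
Definition sy : 'M[C]_2 :=
  \matrix_(i < 2, j < 2) (if i == j then 0 else if (val i == 0%N) then - 'i else 'i).

Definition proj_of (O : 'M[C]_2) (a : bool) : 'M[C]_2 :=
  2^-1 *: (1%:M + (-1) ^+ a *: O).

Definition Aobs (x : bool) : 'M[C]_2 := if x then sy else sx.
Definition Bobs (y : bool) : 'M[C]_2 :=
  (sqrtC 2)^-1 *: (if y then sx + sy else sx - sy).

Definition MA (a x : bool) : 'M[C]_2 := proj_of (Aobs x) a.
Definition MB (b y : bool) : 'M[C]_2 := proj_of (Bobs y) b.

(* tripartite correlation P(abc|xyz), arguments in order a b c x y z *)
Definition corr3 := bool -> bool -> bool -> bool -> bool -> bool -> C.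

Definition SvF (V : C) : corr3 := fun a b c x y z =>
  (2 + (-1) ^+ (a (+) b (+) c (+) (x && y) (+) (y && z) (+) (x && z))
         * sqrtC 2 * V) / 16.

(* quantum correlation between a qubit party with fixed projective
   measurements M (outcome, setting) and a black-box party C
   (arbitrary finite dimension d, arbitrary state and POVMs):
   Q(s c | t z) = Tr[(M_{s|t} (x) N_{c|z}) tau] *)
Definition qcorr_with (M : bool -> bool -> 'M[C]_2)
    (Q : bool -> bool -> bool -> bool -> C) : Prop :=
  exists d : nat, exists tau : 'M[C]_(2 * d), exists N : bool -> bool -> 'M[C]_d,
    is_state tau /\ is_povm N /\
    forall s c t z, Q s c t z = \tr (kron (M s t) (N c z) *m tau).

(* 1SDI steering LHS-LHV (StLHS) model, with finitely many hidden
   variables lambda in each of the three components. *)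
Definition StLHS (P : corr3) : Prop :=
  exists n : nat,
  exists (r p q : 'I_n -> C),
  exists (rhoAB : 'I_n -> 'M[C]_(2 * 2)) (rhoA rhoB : 'I_n -> 'M[C]_2),
  exists (Pl : 'I_n -> bool -> bool -> C),
  exists (QBC QAC : 'I_n -> bool -> bool -> bool -> bool -> C),
    (forall l, 0 <= r l /\ 0 <= p l /\ 0 <= q l) /\
    \sum_l (r l + p l + q l) = 1 /\
    (forall l, is_state (rhoAB l) /\ is_state (rhoA l) /\ is_state (rhoB l)) /\
    (forall l z, 0 <= Pl l false z /\ 0 <= Pl l true z /\
                 Pl l false z + Pl l true z = 1) /\
    (forall l, qcorr_with MB (QBC l) /\ qcorr_with MA (QAC l)) /\
    forall a b c x y z,
      P a b c x y z =
        \sum_l r l * \tr (kron (MA a x) (MB b y) *m rhoAB l) * Pl l c z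
      + \sum_l p l * \tr (MA a x *m rhoA l) * QBC l b c y z
      + \sum_l q l * \tr (MB b y *m rhoB l) * QAC l a c x z.

End QDefs.

(* Let S(P) be the Svetlichny functional, the sum over all (a,b,c,x,y,z) of
   P(abc|xyz) times the sign appearing in the Svetlichny family, so that
   S(P^V_SvF) = 4 sqrt2 V.  Each of the three kinds of terms of a StLHS model
   contributes at most 4 (times its weight):
   - for rho_AB (x) P(c|z), S is a convex combination of +-2(E_00 - E_11) and
     +-2(E_01 + E_10), with E_xy in [-1, 1] the two-qubit correlators;
   - for a trusted qubit of Alice with a quantum Bob-Charlie box, Bob's
     observables satisfy B_0 + B_1 = sqrt2 A_0 and B_0 - B_1 = - sqrt2 A_1, so
     S reduces to sqrt2 times Bloch components of Alice's state paired with
     correlators in [-1, 1]; the Bloch vector has length at most 1, and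
     Cauchy-Schwarz gives the bound 4 (symmetrically for a trusted Bob).
   Hence a StLHS model forces V <= 1/sqrt2.  Conversely, for V <= 1/sqrt2 the
   uniform mixture over four hidden variables of the noisy states
   (1 - t)/4 I + t/2 |psi_w><psi_w| with psi_w = |00> + w|11>, t = sqrt2 V and
   suitable phases w, together with a deterministic Charlie, reproduces
   P^V_SvF exactly. *)
From HB Require Import structures.
From mathcomp Require Import all_boot all_order all_algebra.
From mathcomp Require Import ring.
Import Order.TTheory GRing.Theory Num.Theory.
Local Open Scope ring_scope.
Set Implicit Arguments. Unset Strict Implicit. Unset Printing Implicit Defensive.

Section Kronecker.
Variable C : numClosedFieldType.

Lemma pair_idx_mxvec m n (i : 'I_m) (j : 'I_n) : pair_idx (mxvec_index i j) = (i, j).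
Proof. by rewrite /pair_idx /mxvec_index cast_ordK enum_rankK. Qed.

Lemma big_mxvec_index m n (F : 'I_(m * n) -> C) :
  \sum_k F k = \sum_(i < m) \sum_(j < n) F (mxvec_index i j).
Proof.
rewrite pair_bigA /= (reindex _ (@curry_mxvec_bij m n)) /=.
by apply: eq_bigr => -[i j].
Qed.

Lemma mxvec_index_eq m n (i i' : 'I_m) (j j' : 'I_n) :
  (mxvec_index i j == mxvec_index i' j') = (i == i') && (j == j').
Proof.
apply/eqP/andP => [e|[/eqP-> /eqP->] //].
by move/(congr1 (@pair_idx m n)): e; rewrite !pair_idx_mxvec => -[-> ->].
Qed.

Lemma kronE m n (A : 'M[C]_m) (B : 'M[C]_n) i j i' j' :
  kron A B (mxvec_index i j) (mxvec_index i' j') = A i i' * B j j'.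
Proof. by rewrite /kron mxE !pair_idx_mxvec. Qed.

Lemma kron_mulmx m n (A A' : 'M[C]_m) (B B' : 'M[C]_n) :
  kron A B *m kron A' B' = kron (A *m A') (B *m B').
Proof.
apply/matrixP=> k l; case/mxvec_indexP: k => i j; case/mxvec_indexP: l => i' j'.
rewrite [LHS]mxE big_mxvec_index kronE mxE big_distrl /=; apply: eq_bigr => p _.
rewrite mxE big_distrr /=; apply: eq_bigr => q _; rewrite !kronE; ring.
Qed.

Lemma kron1 m n : kron (1%:M : 'M[C]_m) (1%:M : 'M[C]_n) = 1%:M.
Proof.
apply/matrixP=> k l; case/mxvec_indexP: k => i j; case/mxvec_indexP: l => i' j'.
rewrite kronE !mxE mxvec_index_eq.
by case: (i == i'); case: (j == j'); rewrite /= ?mulr1 ?mulr0 ?mul0r.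
Qed.

Lemma kron_diag m n (a : 'rV[C]_m) (b : 'rV[C]_n) :
  kron (diag_mx a) (diag_mx b) =
  diag_mx (\row_k (a 0 (pair_idx k).1 * b 0 (pair_idx k).2)).
Proof.
apply/matrixP=> k l; case/mxvec_indexP: k => i j; case/mxvec_indexP: l => i' j'.
rewrite kronE !mxE mxvec_index_eq pair_idx_mxvec /=.
by case: (i == i'); case: (j == j'); rewrite /= ?mulr1n ?mulr0n ?mulr0 ?mul0r.
Qed.

Lemma kronDl m n (A A' : 'M[C]_m) (B : 'M[C]_n) : kron (A + A') B = kron A B + kron A' B.
Proof. by apply/matrixP=> k l; rewrite !mxE mulrDl. Qed.

Lemma kronDr m n (A : 'M[C]_m) (B B' : 'M[C]_n) : kron A (B + B') = kron A B + kron A B'.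
Proof. by apply/matrixP=> k l; rewrite !mxE mulrDr. Qed.

Lemma kronZl m n c (A : 'M[C]_m) (B : 'M[C]_n) : kron (c *: A) B = c *: kron A B.
Proof. by apply/matrixP=> k l; rewrite !mxE mulrA. Qed.

Lemma kronNl m n (A : 'M[C]_m) (B : 'M[C]_n) : kron (- A) B = - kron A B.
Proof. by apply/matrixP=> k l; rewrite !mxE mulNr. Qed.

Lemma kronNr m n (A : 'M[C]_m) (B : 'M[C]_n) : kron A (- B) = - kron A B.
Proof. by apply/matrixP=> k l; rewrite !mxE mulrN. Qed.

Lemma kronBl m n (A A' : 'M[C]_m) (B : 'M[C]_n) : kron (A - A') B = kron A B - kron A' B.
Proof. by rewrite kronDl kronNl. Qed.

Lemma kronBr m n (A : 'M[C]_m) (B B' : 'M[C]_n) : kron A (B - B') = kron A B - kron A B'.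
Proof. by rewrite kronDr kronNr. Qed.

Lemma mxtrace_kron m n (A : 'M[C]_m) (B : 'M[C]_n) : \tr (kron A B) = \tr A * \tr B.
Proof.
rewrite /mxtrace big_mxvec_index big_distrl /=; apply: eq_bigr => i _.
by rewrite big_distrr /=; apply: eq_bigr => j _; rewrite kronE.
Qed.

Lemma mxtrace_mulDl n (A B R : 'M[C]_n) : \tr ((A + B) *m R) = \tr (A *m R) + \tr (B *m R).
Proof. by rewrite mulmxDl mxtraceD. Qed.

Lemma mxtrace_mulBl n (A B R : 'M[C]_n) : \tr ((A - B) *m R) = \tr (A *m R) - \tr (B *m R).
Proof. by rewrite mulmxBl linearB. Qed.

Lemma mxtrace_mulNl n (A R : 'M[C]_n) : \tr ((- A) *m R) = - \tr (A *m R).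
Proof. by rewrite mulNmx linearN. Qed.

Lemma mxtrace_mulZl n c (A R : 'M[C]_n) : \tr ((c *: A) *m R) = c * \tr (A *m R).
Proof. by rewrite -scalemxAl mxtraceZ. Qed.

Lemma mxtrace_kron_sub m n (P Q : 'M[C]_m) (P' Q' : 'M[C]_n) (rho : 'M[C]_(m * n)) :
  \tr (kron (P - Q) (P' - Q') *m rho) =
  \tr (kron P P' *m rho) - \tr (kron P Q' *m rho) - \tr (kron Q P' *m rho)
  + \tr (kron Q Q' *m rho).
Proof. by rewrite kronBl !kronBr !mxtrace_mulBl; ring. Qed.

End Kronecker.

Section Adjoint.
Variable C : numClosedFieldType.

Lemma adj_mulmx m n p (A : 'M[C]_(m, n)) (B : 'M[C]_(n, p)) : adj (A *m B) = adj B *m adj A.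
Proof. by rewrite /adj trmx_mul map_mxM. Qed.

Lemma adjK m n (A : 'M[C]_(m, n)) : adj (adj A) = A.
Proof. exact: trmxCK. Qed.

Lemma adjD m n (A B : 'M[C]_(m, n)) : adj (A + B) = adj A + adj B.
Proof. by apply/matrixP=> i j; rewrite !mxE rmorphD. Qed.

Lemma adjZ m n c (A : 'M[C]_(m, n)) : adj (c *: A) = c^* *: adj A.
Proof. by apply/matrixP=> i j; rewrite !mxE rmorphM. Qed.

Lemma adjN m n (A : 'M[C]_(m, n)) : adj (- A) = - adj A.
Proof. by apply/matrixP=> i j; rewrite !mxE rmorphN. Qed.

Lemma adj1 n : adj (1%:M : 'M[C]_n) = 1%:M.
Proof. by apply/matrixP=> i j; rewrite !mxE rmorph_nat eq_sym. Qed.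

Lemma adj0 m n : adj (0 : 'M[C]_(m, n)) = 0.
Proof. by apply/matrixP=> i j; rewrite !mxE rmorph0. Qed.

Lemma adj_kron m n (A : 'M[C]_m) (B : 'M[C]_n) : adj (kron A B) = kron (adj A) (adj B).
Proof. by apply/matrixP=> k l; rewrite !mxE rmorphM. Qed.

End Adjoint.

Section Psd.
Variable C : numClosedFieldType.

Lemma form_diag_mx n (w c : 'rV[C]_n) :
  (w *m diag_mx c *m adj w) 0 0 = \sum_k c 0 k * (w 0 k * (w 0 k)^*).
Proof.
rewrite mxE; apply: eq_bigr => k _; rewrite !mxE (bigD1 k) //= big1 ?addr0.
  by rewrite !mxE eqxx mulr1n; ring.
by move=> j /negbTE nj; rewrite !mxE nj mulr0n mulr0.
Qed.

Lemma psd_conj_diag n (K : 'M[C]_n) (c : 'rV[C]_n) :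
  (forall k, 0 <= c 0 k) -> psd (adj K *m diag_mx c *m K).
Proof.
move=> c0; split.
  rewrite !adj_mulmx adjK mulmxA; congr (_ *m _ *m _).
  apply/matrixP=> i j; rewrite !mxE; case: eqVneq => [->|ne]; rewrite ?eqxx ?mulr1n.
    by rewrite geC0_conj.
  by rewrite !mulr0n rmorph0.
move=> v; rewrite -!mulmxA mulmxA -[K *m adj v]adjK adj_mulmx adjK mulmxA form_diag_mx.
by apply: sumr_ge0 => k _; apply: mulr_ge0 => //; apply: mul_conjC_ge0.
Qed.

Lemma form_row_mx n (K A : 'M[C]_n) k :
  (K *m A *m adj K) k k = (row k K *m A *m adj (row k K)) 0 0.
Proof. by rewrite -!row_mul mxE !mxE; apply: eq_bigr => j _; rewrite !mxE. Qed.

Lemma psd_spectral n (A : 'M[C]_n) : psd A ->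
  exists K : 'M[C]_n, exists c : 'rV[C]_n,
    (forall k, 0 <= c 0 k) /\ A = adj K *m diag_mx c *m K.
Proof.
move=> [hA fA].
have nA : A \is normalmx by apply/normalmxP; change (A *m adj A = adj A *m A); rewrite hA.
have uU : spectralmx A *m adj (spectralmx A) = 1%:M by apply/unitarymxP/spectral_unitarymx.
have eA := orthomx_spectralP nA; rewrite invmx_unitary ?spectral_unitarymx // in eA.
exists (spectralmx A), (spectral_diag A); split=> // k.
have : spectralmx A *m A *m adj (spectralmx A) = diag_mx (spectral_diag A).
  by rewrite {2}eA !mulmxA uU mul1mx -mulmxA uU mulmx1.
move/matrixP/(_ k k); rewrite [RHS]mxE eqxx mulr1n => <-.
by rewrite form_row_mx; apply: fA.
Qed.

Lemma psd_mxtrace_mul_ge0 n (A B : 'M[C]_n) : psd A -> psd B -> 0 <= \tr (A *m B).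
Proof.
move=> pA /psd_spectral [K [c [c0 ->]]].
rewrite mulmxA mxtrace_mulC !mulmxA /mxtrace; apply: sumr_ge0 => k _.
rewrite mxE (bigD1 k) //= big1 ?addr0; last first.
  by move=> j /negbTE nj; rewrite !mxE nj mulr0n mulr0.
rewrite [diag_mx c k k]mxE eqxx mulr1n; apply: mulr_ge0 => //.
by rewrite form_row_mx; case: pA => _; apply.
Qed.

Lemma psd_kron m n (A : 'M[C]_m) (B : 'M[C]_n) : psd A -> psd B -> psd (kron A B).
Proof.
move=> /psd_spectral [P [a [a0 ->]]] /psd_spectral [Q [b [b0 ->]]].
rewrite -!kron_mulmx -adj_kron kron_diag; apply: psd_conj_diag => k.
by rewrite mxE; apply: mulr_ge0.
Qed.

Lemma psdD n (A B : 'M[C]_n) : psd A -> psd B -> psd (A + B).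
Proof.
move=> [hA fA] [hB fB]; split; first by rewrite adjD hA hB.
by move=> v; rewrite mulmxDr mulmxDl mxE; apply: addr_ge0.
Qed.

Lemma psdZ n (c : C) (A : 'M[C]_n) : 0 <= c -> psd A -> psd (c *: A).
Proof.
move=> c0 [hA fA]; split; first by rewrite adjZ hA geC0_conj.
by move=> v; rewrite -scalemxAr -scalemxAl mxE; apply: mulr_ge0.
Qed.

Lemma psd0 n : psd (0 : 'M[C]_n).
Proof. by split; [rewrite adj0|move=> v; rewrite mulmx0 mul0mx mxE]. Qed.

Lemma psd_gram m n (u : 'M[C]_(m, n)) : psd (adj u *m u).
Proof.
split=> [|v]; first by rewrite adj_mulmx adjK.
rewrite mulmxA -[v *m adj u *m u *m adj v]mulmxA -[u *m adj v]adjK adj_mulmx adjK.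
by rewrite mxE; apply: sumr_ge0 => k _; rewrite /adj !mxE; apply: mul_conjC_ge0.
Qed.

Lemma psd_proj n (P : 'M[C]_n) : adj P = P -> P *m P = P -> psd P.
Proof. by move=> hP pP; rewrite -pP -{1}hP; apply: psd_gram. Qed.

Lemma psd1 n : psd (1%:M : 'M[C]_n).
Proof. by apply: psd_proj; rewrite ?adj1 ?mulmx1. Qed.

Lemma is_state_scalar n : is_state ((n.+1%:R)^-1 *: (1%:M : 'M[C]_n.+1)).
Proof.
split; first by apply: psdZ; [rewrite invr_ge0 ler0n | exact: psd1].
by rewrite mxtraceZ mxtrace1 mulVf // pnatr_eq0.
Qed.

Section TwoOutcomeCorrelator.
Variables (m n : nat) (P Q : 'M[C]_m) (P' Q' : 'M[C]_n) (rho : 'M[C]_(m * n)).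
Hypotheses (psdP : psd P) (psdQ : psd Q) (PQ1 : P + Q = 1%:M).
Hypotheses (psdP' : psd P') (psdQ' : psd Q') (PQ1' : P' + Q' = 1%:M).
Hypothesis rho_state : is_state rho.

(* The correlator is 1 - 2 Pr[outcomes differ]; here 1 is the trace of
   (P + Q) (x) (P' + Q') against rho. *)
Lemma correlator_le1 : \tr (kron (P - Q) (P' - Q') *m rho) <= 1.
Proof.
have [psd_rho tr_rho] := rho_state.
have e1 : \tr (kron (P + Q) (P' + Q') *m rho) = 1 by rewrite PQ1 PQ1' kron1 mul1mx.
rewrite -e1 mxtrace_kron_sub kronDl !kronDr !mxtrace_mulDl -subr_ge0.
have h1 := psd_mxtrace_mul_ge0 (psd_kron psdP psdQ') psd_rho.
have h2 := psd_mxtrace_mul_ge0 (psd_kron psdQ psdP') psd_rho.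
set a := \tr (kron P P' *m rho); set b := \tr (kron P Q' *m rho).
set c := \tr (kron Q P' *m rho); set d := \tr (kron Q Q' *m rho).
have -> : a + b + (c + d) - (a - b - c + d) = b *+ 2 + c *+ 2 by ring.
by apply: addr_ge0; apply: mulrn_wge0.
Qed.

End TwoOutcomeCorrelator.

Lemma correlator_bound m n (P Q : 'M[C]_m) (P' Q' : 'M[C]_n) (rho : 'M[C]_(m * n)) :
  psd P -> psd Q -> P + Q = 1%:M -> psd P' -> psd Q' -> P' + Q' = 1%:M ->
  is_state rho -> -1 <= \tr (kron (P - Q) (P' - Q') *m rho) <= 1.
Proof.
move=> pP pQ e pP' pQ' e' hr; rewrite (correlator_le1 pP pQ e pP' pQ' e' hr) andbT.
have eQP : Q + P = 1%:M by rewrite addrC.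
have := correlator_le1 pQ pP eQP pP' pQ' e' hr.
by rewrite -opprB kronNl mxtrace_mulNl lerNl.
Qed.

End Psd.

Section Qubit.
Variable C : numClosedFieldType.
Local Notation sqrt2 := (sqrtC (2 : C)).
Local Notation i0 := (ord0 : 'I_2).
Local Notation i1 := (lift ord0 ord0 : 'I_2).

Ltac mx2 := apply/matrixP; move=> [[|[|?]] ?] [[|[|?]] ?] //;
  rewrite !mxE /= ?big_ord_recl ?big_ord0 /= ?mxE /=.

Ltac simpl_pauli := rewrite ?mulr0 ?mul0r ?add0r ?addr0 ?mulr1 ?mul1r ?mulrN ?mulNr
  ?opprK -?expr2 ?sqrCi ?opprK ?rmorph0 ?rmorph1 ?rmorphN /= ?conjCi ?opprK ?subrr ?addNr //.

Lemma sx_mulmx_sx : sx C *m sx C = 1%:M.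
Proof. by mx2; simpl_pauli. Qed.

Lemma sy_mulmx_sy : sy C *m sy C = 1%:M.
Proof. by mx2; simpl_pauli. Qed.

Lemma sx_sy_anticomm : sx C *m sy C + sy C *m sx C = 0.
Proof. by mx2; simpl_pauli. Qed.

Lemma adj_sx : adj (sx C) = sx C.
Proof. by mx2; simpl_pauli. Qed.

Lemma adj_sy : adj (sy C) = sy C.
Proof. by mx2; simpl_pauli. Qed.

Lemma mxtrace_sx_mul (R : 'M[C]_2) : \tr (sx C *m R) = R i1 i0 + R i0 i1.
Proof. by rewrite /mxtrace !big_ord_recl !big_ord0 !mxE !big_ord_recl !big_ord0 !mxE /=; ring. Qed.

Lemma mxtrace_sy_mul (R : 'M[C]_2) : \tr (sy C *m R) = - 'i * R i1 i0 + 'i * R i0 i1.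
Proof. by rewrite /mxtrace !big_ord_recl !big_ord0 !mxE !big_ord_recl !big_ord0 !mxE /=; ring. Qed.

Lemma mxtrace_sx : \tr (sx C) = 0.
Proof. by rewrite -[sx C]mulmx1 mxtrace_sx_mul !mxE /= addr0. Qed.

Lemma mxtrace_sy : \tr (sy C) = 0.
Proof. by rewrite -[sy C]mulmx1 mxtrace_sy_mul !mxE /= !mulr0 addr0. Qed.

Lemma qubit_form (v : 'rV[C]_2) (R : 'M[C]_2) : (v *m R *m adj v) 0 0 =
  v 0 i0 * R i0 i0 * (v 0 i0)^* + v 0 i0 * R i0 i1 * (v 0 i1)^* +
  v 0 i1 * R i1 i0 * (v 0 i0)^* + v 0 i1 * R i1 i1 * (v 0 i1)^*.
Proof. by rewrite !mxE !big_ord_recl !big_ord0 !mxE !big_ord_recl !big_ord0 /=; ring. Qed.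

Lemma bloch_ball (R : 'M[C]_2) : is_state R ->
  [/\ \tr (sx C *m R) \is Num.real, \tr (sy C *m R) \is Num.real &
      \tr (sx C *m R) ^+ 2 + \tr (sy C *m R) ^+ 2 <= 1].
Proof.
move=> [[hR fR] trR].
have e10 : R i1 i0 = (R i0 i1)^*.
  by move/matrixP: hR => /(_ i1 i0); rewrite !mxE => <-.
have etr : R i0 i0 + R i1 i1 = 1.
  by move: trR; rewrite /mxtrace !big_ord_recl big_ord0 addr0.
rewrite mxtrace_sx_mul mxtrace_sy_mul e10; set q := R i0 i1.
split.
- by apply/CrealP; rewrite rmorphD /= conjCK addrC.
- by apply/CrealP; rewrite rmorphD !rmorphM rmorphN /= conjCK conjCi opprK addrC.
(* the form at (1, -2q) and at (-2q^*, 1) adds up to 1 - 4 q q^* *)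
have f1 := fR (\row_j (if j == i0 then 1 else - 2 * q)).
have f2 := fR (\row_j (if j == i0 then - 2 * q^* else 1)).
rewrite qubit_form !mxE /= e10 -/q in f1; rewrite qubit_form !mxE /= e10 -/q in f2.
have := addr_ge0 f1 f2.
rewrite ?rmorph1 ?rmorphM ?rmorphN ?rmorph_nat /= ?conjCK.
have -> : R i1 i1 = 1 - R i0 i0 by rewrite -etr; ring.
move=> h; rewrite -subr_ge0.
have -> : 1 - ((q^* + q) ^+ 2 + (- 'i * q^* + 'i * q) ^+ 2) =
   1 - (q^* + q) ^+ 2 - 'i ^+ 2 * (q - q^*) ^+ 2 by ring.
by rewrite sqrCi; move: h; congr (0 <= _); ring.
Qed.

Lemma proj_of_adj (O : 'M[C]_2) b : adj O = O -> adj (proj_of O b) = proj_of O b.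
Proof.
move=> hO; rewrite /proj_of adjZ adjD adj1 adjZ hO geC0_conj ?invr_ge0 ?ler0n //.
by case: b; rewrite ?expr0 ?expr1 ?rmorph1 ?rmorphN ?rmorph1.
Qed.

Lemma proj_of_idem (O : 'M[C]_2) b : O *m O = 1%:M -> proj_of O b *m proj_of O b = proj_of O b.
Proof.
move=> hO; rewrite /proj_of -scalemxAl -scalemxAr scalerA.
rewrite mulmxDl !mulmxDr mul1mx mulmx1 -!scalemxAl -!scalemxAr scalerA hO mul1mx.
apply/matrixP=> i j; rewrite !mxE.
by case: b; rewrite ?expr0 ?expr1; field.
Qed.

Lemma proj_of_psd (O : 'M[C]_2) b : adj O = O -> O *m O = 1%:M -> psd (proj_of O b).
Proof. by move=> h1 h2; apply: psd_proj; [apply: proj_of_adj|apply: proj_of_idem]. Qed.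

Lemma proj_of_sum (O : 'M[C]_2) : proj_of O false + proj_of O true = 1%:M.
Proof. by apply/matrixP=> i j; rewrite !mxE /= expr0 expr1; field. Qed.

Lemma proj_of_sub (O : 'M[C]_2) : proj_of O false - proj_of O true = O.
Proof. by apply/matrixP=> i j; rewrite !mxE /= expr0 expr1; field. Qed.

Lemma mxtrace_proj_of (O : 'M[C]_2) b : \tr O = 0 -> \tr (proj_of O b) = 1.
Proof.
by move=> O0; rewrite mxtraceZ mxtraceD mxtraceZ O0 mxtrace1 mulr0 addr0 mulVf ?pnatr_eq0.
Qed.

Lemma sqrt2_gt0 : 0 < sqrt2.
Proof. by rewrite sqrtC_gt0 ltr0n. Qed.

Lemma sqrt2_neq0 : sqrt2 != 0.
Proof. by rewrite gt_eqF // sqrt2_gt0. Qed.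

Lemma sqrt2_real : sqrt2 \is Num.real.
Proof. by rewrite gtr0_real // sqrt2_gt0. Qed.

Lemma sqrt2_sqr : sqrt2 * sqrt2 = 2.
Proof. by rewrite -expr2 sqrtCK. Qed.

Lemma invsqrt2_sqr : sqrt2^-1 * sqrt2^-1 * 2 = 1.
Proof. have := sqrt2_neq0; have := sqrt2_sqr; move: sqrt2 => t <- t0; field; exact: t0. Qed.

Lemma invsqrt2_mul2 : sqrt2^-1 * 2 = sqrt2.
Proof. have := sqrt2_neq0; have := sqrt2_sqr; move: sqrt2 => t <- t0; field; exact: t0. Qed.

Lemma conj_invsqrt2 : (sqrt2^-1)^* = sqrt2^-1.
Proof. by rewrite geC0_conj // invr_ge0 ltW // sqrt2_gt0. Qed.

Lemma adj_Aobs x : adj (Aobs C x) = Aobs C x.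
Proof. by case: x; rewrite /= ?adj_sx ?adj_sy. Qed.

Lemma Aobs_sqr x : Aobs C x *m Aobs C x = 1%:M.
Proof. by case: x; rewrite /= ?sx_mulmx_sx ?sy_mulmx_sy. Qed.

Lemma mxtrace_Aobs x : \tr (Aobs C x) = 0.
Proof. by case: x; rewrite /= ?mxtrace_sx ?mxtrace_sy. Qed.

Lemma adj_Bobs y : adj (Bobs C y) = Bobs C y.
Proof. by rewrite /Bobs adjZ conj_invsqrt2; case: y; rewrite ?adjD ?adjN adj_sx adj_sy. Qed.

Lemma sx_add_sy_sqr (e : C) : e ^+ 2 = 1 ->
  (sx C + e *: sy C) *m (sx C + e *: sy C) = 2%:R *: 1%:M.
Proof.
move=> e2; rewrite mulmxDl !mulmxDr -!scalemxAl -!scalemxAr scalerA -expr2 e2 scale1r.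
move/eqP: sx_sy_anticomm; rewrite addr_eq0 => /eqP ->.
by rewrite sx_mulmx_sx sy_mulmx_sy scalerN addrA addrNK scaler_nat mulr2n.
Qed.

Lemma Bobs_sqr y : Bobs C y *m Bobs C y = 1%:M.
Proof.
have -> : Bobs C y = sqrt2^-1 *: (sx C + (if y then 1 else -1) *: sy C).
  by rewrite /Bobs; case: y; rewrite ?scale1r ?scaleN1r.
rewrite -scalemxAl -scalemxAr scalerA sx_add_sy_sqr; last by case: y; rewrite /= ?sqrrN expr1n.
by rewrite scalerA invsqrt2_sqr scale1r.
Qed.

Lemma mxtrace_Bobs y : \tr (Bobs C y) = 0.
Proof.
by rewrite /Bobs mxtraceZ; case: y; rewrite ?linearD ?linearN /= mxtrace_sx mxtrace_sy
  ?oppr0 addr0 mulr0.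
Qed.

Lemma MA_psd a x : psd (MA C a x).
Proof. exact: proj_of_psd (adj_Aobs x) (Aobs_sqr x). Qed.

Lemma MB_psd b y : psd (MB C b y).
Proof. exact: proj_of_psd (adj_Bobs y) (Bobs_sqr y). Qed.

Lemma Bobs_add : Bobs C false + Bobs C true = sqrt2 *: Aobs C false.
Proof.
by apply/matrixP=> i j; rewrite !mxE /= -[in RHS]invsqrt2_mul2; ring.
Qed.

Lemma Bobs_sub : Bobs C false - Bobs C true = - (sqrt2 *: Aobs C true).
Proof.
by apply/matrixP=> i j; rewrite !mxE /= -[in RHS]invsqrt2_mul2; ring.
Qed.

Lemma Aobs_add : Aobs C false + Aobs C true = sqrt2 *: Bobs C true.
Proof. by apply/matrixP=> i j; rewrite !mxE /=; field; exact: sqrt2_neq0. Qed.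

Lemma Aobs_sub : Aobs C false - Aobs C true = sqrt2 *: Bobs C false.
Proof. by apply/matrixP=> i j; rewrite !mxE /=; field; exact: sqrt2_neq0. Qed.

End Qubit.

Section ScalarBounds.
Variable C : numClosedFieldType.
Local Notation sqrt2 := (sqrtC (2 : C)).

Lemma bound_oppr (g : C) : -1 <= g <= 1 -> -1 <= - g <= 1.
Proof. by move=> /andP[h1 h2]; rewrite lerNr opprK h2 lerNl h1. Qed.

Lemma sqr_le1 (g : C) : -1 <= g <= 1 -> g ^+ 2 <= 1.
Proof.
move=> /andP[h1 h2]; rewrite -subr_ge0.
have -> : 1 - g ^+ 2 = (1 - g) * (g - -1) by ring.
by apply: mulr_ge0; rewrite subr_ge0.
Qed.

Lemma bloch_pair_le2 (a0 a1 g0 g1 : C) : a0 \is Num.real -> a1 \is Num.real ->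
  a0 ^+ 2 + a1 ^+ 2 <= 1 -> -1 <= g0 <= 1 -> -1 <= g1 <= 1 ->
  a0 * (sqrt2 * g0) + a1 * (sqrt2 * g1) <= 2.
Proof.
move=> ra0 ra1 ha hg0 hg1.
have rg0 : g0 \is Num.real by case/andP: hg0 => /ler_real <- _; rewrite rpredN rpred1.
have rg1 : g1 \is Num.real by case/andP: hg1 => /ler_real <- _; rewrite rpredN rpred1.
have r2 : (2^-1 : C) \is Num.real by rewrite rpredV rpred_nat.
have rd0 : a0 - sqrt2 * g0 / 2 \is Num.real by rewrite rpredB ?rpredM ?sqrt2_real.
have rd1 : a1 - sqrt2 * g1 / 2 \is Num.real by rewrite rpredB ?rpredM ?sqrt2_real.
rewrite -subr_ge0.
have -> : 2 - (a0 * (sqrt2 * g0) + a1 * (sqrt2 * g1)) =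
   (1 - (a0 ^+ 2 + a1 ^+ 2)) + ((1 - g0 ^+ 2) + (1 - g1 ^+ 2)) / 2 +
   ((a0 - sqrt2 * g0 / 2) ^+ 2 + (a1 - sqrt2 * g1 / 2) ^+ 2) +
   (2 - sqrt2 * sqrt2) / 4 * (g0 ^+ 2 + g1 ^+ 2) by field.
rewrite sqrt2_sqr subrr !mul0r addr0.
apply: addr_ge0; [apply: addr_ge0|].
- by rewrite subr_ge0.
- apply: mulr_ge0; last by rewrite invr_ge0 ler0n.
  by apply: addr_ge0; rewrite subr_ge0 sqr_le1.
- by apply: addr_ge0; apply: real_exprn_even_ge0.
Qed.

Lemma bloch_chsh_le4 (a0 a1 : C) (F G : bool -> bool -> C) :
  a0 \is Num.real -> a1 \is Num.real -> a0 ^+ 2 + a1 ^+ 2 <= 1 ->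
  (forall z, F false z + F true z = sqrt2 * G false z) ->
  (forall z, F false z - F true z = sqrt2 * G true z) ->
  (forall k z, -1 <= G k z <= 1) ->
  a0 * (F false false + F true false) + a1 * (F false false - F true false) +
  a0 * (F false true - F true true) - a1 * (F false true + F true true) <= 4.
Proof.
move=> ra0 ra1 ha Fadd Fsub hG; rewrite !Fadd !Fsub.
have -> : a0 * (sqrt2 * G false false) + a1 * (sqrt2 * G true false) +
    a0 * (sqrt2 * G true true) - a1 * (sqrt2 * G false true) =
  (a0 * (sqrt2 * G false false) + a1 * (sqrt2 * G true false)) +
  (a0 * (sqrt2 * G true true) + a1 * (sqrt2 * - G false true)) by ring.
have -> : (4 : C) = 2 + 2 by ring.
by apply: lerD; apply: bloch_pair_le2; rewrite ?bound_oppr.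
Qed.

Lemma chsh_mix_le4 (E00 E01 E10 E11 p0 q0 p1 q1 : C) :
  -1 <= E00 <= 1 -> -1 <= E01 <= 1 -> -1 <= E10 <= 1 -> -1 <= E11 <= 1 ->
  0 <= p0 -> 0 <= q0 -> 0 <= p1 -> 0 <= q1 -> p0 + q0 = 1 -> p1 + q1 = 1 ->
  (p0 - q0) * (E00 + E01 + E10 - E11) + (p1 - q1) * (E00 - E01 - E10 - E11) <= 4.
Proof.
move=> /andP[a1 a2] /andP[b1 b2] /andP[c1 c2] /andP[d1 d2] hp0 hq0 hp1 hq1 e0 e1.
have q0E : q0 = 1 - p0 by rewrite -e0; ring.
have q1E : q1 = 1 - p1 by rewrite -e1; ring.
(* expand along the four deterministic strategies of Charlie *)
have -> : (p0 - q0) * (E00 + E01 + E10 - E11) + (p1 - q1) * (E00 - E01 - E10 - E11) =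
  p0 * p1 * (2 * (E00 - E11)) + p0 * q1 * (2 * (E01 + E10)) +
  q0 * p1 * (- 2 * (E01 + E10)) + q0 * q1 * (- 2 * (E00 - E11)) by rewrite q0E q1E; ring.
have -> : (4 : C) = p0 * p1 * 4 + p0 * q1 * 4 + q0 * p1 * 4 + q0 * q1 * 4.
  by rewrite q0E q1E; ring.
have l1 : 2 * (E00 - E11) <= 4.
  rewrite -subr_ge0; have -> : 4 - 2 * (E00 - E11) = 2 * ((1 - E00) + (E11 - -1)) by ring.
  by apply: mulr_ge0; rewrite ?ler0n // addr_ge0 // subr_ge0.
have l2 : 2 * (E01 + E10) <= 4.
  rewrite -subr_ge0; have -> : 4 - 2 * (E01 + E10) = 2 * ((1 - E01) + (1 - E10)) by ring.
  by apply: mulr_ge0; rewrite ?ler0n // addr_ge0 // subr_ge0.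
have l3 : - 2 * (E01 + E10) <= 4.
  rewrite -subr_ge0; have -> : 4 - - 2 * (E01 + E10) = 2 * ((E01 - -1) + (E10 - -1)) by ring.
  by apply: mulr_ge0; rewrite ?ler0n // addr_ge0 // subr_ge0.
have l4 : - 2 * (E00 - E11) <= 4.
  rewrite -subr_ge0; have -> : 4 - - 2 * (E00 - E11) = 2 * ((E00 - -1) + (1 - E11)) by ring.
  by apply: mulr_ge0; rewrite ?ler0n // addr_ge0 // subr_ge0.
by repeat apply: lerD; apply: ler_wpM2l => //; apply: mulr_ge0.
Qed.

End ScalarBounds.

Section Svetlichny.
Variable C : numClosedFieldType.
Local Notation sqrt2 := (sqrtC (2 : C)).

Definition svet_sign (a b c x y z : bool) : C :=
  (-1) ^+ (a (+) b (+) c (+) (x && y) (+) (y && z) (+) (x && z)).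

Definition svet (P : corr3 C) : C :=
  \sum_(a : bool) \sum_(b : bool) \sum_(c : bool) \sum_(x : bool) \sum_(y : bool)
    \sum_(z : bool) svet_sign a b c x y z * P a b c x y z.

Lemma svet_SvF V : svet (SvF V) = 4 * sqrt2 * V.
Proof. by rewrite /svet /SvF /svet_sign !big_bool /= ?expr0 ?expr1; field. Qed.

Lemma eq_svet (P Q : corr3 C) :
  (forall a b c x y z, P a b c x y z = Q a b c x y z) -> svet P = svet Q.
Proof. by move=> PQ; rewrite /svet; do 6 (apply: eq_bigr => ? _); rewrite PQ. Qed.

Lemma svetD (P Q : corr3 C) :
  svet (fun a b c x y z => P a b c x y z + Q a b c x y z) = svet P + svet Q.
Proof. by rewrite /svet; do 6 (rewrite -big_split; apply: eq_bigr => ? _); rewrite mulrDr. Qed.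

Lemma svetZ k (P : corr3 C) : svet (fun a b c x y z => k * P a b c x y z) = k * svet P.
Proof. by rewrite /svet; do 6 (rewrite mulr_sumr; apply: eq_bigr => ? _); rewrite mulrCA. Qed.

Lemma svet_sum n (F : 'I_n -> corr3 C) :
  svet (fun a b c x y z => \sum_i F i a b c x y z) = \sum_i svet (F i).
Proof.
rewrite /svet; symmetry.
do 6 (rewrite exchange_big; apply: eq_bigr => ? _).
by rewrite big_distrr.
Qed.

Lemma svet_local_eq (E : bool -> bool -> bool -> bool -> C) (Pc : bool -> bool -> C) :
  let chsh x y := E false x false y - E false x true y - E true x false y + E true x true y in
  svet (fun a b c x y z => E a x b y * Pc c z) =
  (Pc false false - Pc true false) *
    (chsh false false + chsh false true + chsh true false - chsh true true) +
  (Pc false true - Pc true true) *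
    (chsh false false - chsh false true - chsh true false - chsh true true).
Proof. by rewrite /svet /svet_sign !big_bool /= ?expr0 ?expr1; ring. Qed.

Lemma svet_trustedA_eq (u : bool -> bool -> C) (w : bool -> bool -> bool -> bool -> C) :
  let a x := u false x - u true x in
  let F y z := w false false y z - w false true y z - w true false y z + w true true y z in
  svet (fun a b c x y z => u a x * w b c y z) =
  a false * (F false false + F true false) + a true * (F false false - F true false) +
  a false * (F false true - F true true) - a true * (F false true + F true true).
Proof. by rewrite /svet /svet_sign !big_bool /= ?expr0 ?expr1; ring. Qed.

Lemma svet_trustedB_eq (u : bool -> bool -> C) (w : bool -> bool -> bool -> bool -> C) :
  let b y := u false y - u true y in
  let F x z := w false false x z - w false true x z - w true false x z + w true true x z in
  svet (fun a b c x y z => u b y * w a c x z) =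
  b false * (F false false + F true false) + b true * (F false false - F true false) +
  b false * (F false true - F true true) - b true * (F false true + F true true).
Proof. by rewrite /svet /svet_sign !big_bool /= ?expr0 ?expr1; ring. Qed.

Lemma mxtrace_proj_of_sub (O : 'M[C]_2) (R : 'M[C]_2) :
  \tr (proj_of O false *m R) - \tr (proj_of O true *m R) = \tr (O *m R).
Proof. by rewrite -mxtrace_mulBl proj_of_sub. Qed.

Lemma mxtrace_kron_proj_of d (O : 'M[C]_2) (N0 N1 : 'M[C]_d) (tau : 'M[C]_(2 * d)) :
  \tr (kron (proj_of O false) N0 *m tau) - \tr (kron (proj_of O false) N1 *m tau)
  - \tr (kron (proj_of O true) N0 *m tau) + \tr (kron (proj_of O true) N1 *m tau)
  = \tr (kron O (N0 - N1) *m tau).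
Proof. by rewrite -mxtrace_kron_sub proj_of_sub. Qed.

Lemma qubit_correlator_bound d (O : 'M[C]_2) (N : bool -> bool -> 'M[C]_d)
    (tau : 'M[C]_(2 * d)) z :
  adj O = O -> O *m O = 1%:M -> is_povm N -> is_state tau ->
  -1 <= \tr (kron O (N false z - N true z) *m tau) <= 1.
Proof.
move=> hO O2 [psdN sumN] htau; rewrite -[in kron O _](proj_of_sub O).
by apply: correlator_bound;
  [exact: proj_of_psd|exact: proj_of_psd|exact: proj_of_sum|exact: psdN|exact: psdN|exact: sumN|].
Qed.

Lemma bloch_ball_Bobs (R : 'M[C]_2) : is_state R ->
  [/\ \tr (Bobs C false *m R) \is Num.real, \tr (Bobs C true *m R) \is Num.real &
      \tr (Bobs C false *m R) ^+ 2 + \tr (Bobs C true *m R) ^+ 2 <= 1].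
Proof.
move=> /bloch_ball[rx ry hxy].
rewrite /Bobs /= -!scalemxAl !mxtraceZ !(mulmxDl, mulNmx, linearD, linearN) /=.
have rs : sqrt2^-1 \is Num.real by rewrite rpredV sqrt2_real.
split; rewrite ?rpredM ?rpredB ?rpredD //.
set x := \tr (sx C *m R) in hxy *; set y := \tr (sy C *m R) in hxy *.
have -> : (sqrt2^-1 * (x - y)) ^+ 2 + (sqrt2^-1 * (x + y)) ^+ 2 =
  sqrt2^-1 * sqrt2^-1 * 2 * (x ^+ 2 + y ^+ 2) by ring.
by rewrite invsqrt2_sqr mul1r.
Qed.

End Svetlichny.

Section ComponentBounds.
Variable C : numClosedFieldType.

Lemma svet_local_le4 (rho : 'M[C]_(2 * 2)) (Pc : bool -> bool -> C) : is_state rho ->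
  (forall z, 0 <= Pc false z /\ 0 <= Pc true z /\ Pc false z + Pc true z = 1) ->
  svet (fun a b c x y z => \tr (kron (MA C a x) (MB C b y) *m rho) * Pc c z) <= 4.
Proof.
move=> hrho hPc.
rewrite (svet_local_eq (fun a x b y => \tr (kron (MA C a x) (MB C b y) *m rho))) /=.
have hE x y : -1 <= \tr (kron (MA C false x) (MB C false y) *m rho) -
    \tr (kron (MA C false x) (MB C true y) *m rho) -
    \tr (kron (MA C true x) (MB C false y) *m rho) +
    \tr (kron (MA C true x) (MB C true y) *m rho) <= 1.
  rewrite -mxtrace_kron_sub; apply: correlator_bound;
    [exact: MA_psd|exact: MA_psd|exact: proj_of_sum|exact: MB_psd|exact: MB_psd|
     exact: proj_of_sum|exact: hrho].
have [p0 [q0 e0]] := hPc false; have [p1 [q1 e1]] := hPc true.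
exact: chsh_mix_le4.
Qed.

Lemma svet_trustedA_le4 (rA : 'M[C]_2) (Q : bool -> bool -> bool -> bool -> C) :
  is_state rA -> qcorr_with (MB C) Q ->
  svet (fun a b c x y z => \tr (MA C a x *m rA) * Q b c y z) <= 4.
Proof.
move=> hA [d [tau [N [htau [hN hQ]]]]].
rewrite (svet_trustedA_eq (fun a x => \tr (MA C a x *m rA)) Q) /= !hQ.
rewrite /MA /MB !mxtrace_proj_of_sub !mxtrace_kron_proj_of.
have [ra0 ra1 hb] := bloch_ball hA.
set g := fun (O : 'M[C]_2) z => \tr (kron O (N false z - N true z) *m tau).
apply: (@bloch_chsh_le4 _ _ _ (fun y z => g (Bobs C y) z)
  (fun k z => if k then - g (Aobs C true) z else g (Aobs C false) z)) => //.
- by move=> z; rewrite /g -mxtrace_mulDl -kronDl Bobs_add kronZl mxtrace_mulZl.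
- move=> z; rewrite /g -mxtrace_mulBl -kronBl Bobs_sub kronNl mxtrace_mulNl.
  by rewrite kronZl mxtrace_mulZl mulrN.
- move=> [] z /=; rewrite ?bound_oppr //.
  + exact: qubit_correlator_bound (adj_Aobs C true) (Aobs_sqr C true) hN htau.
  + exact: qubit_correlator_bound (adj_Aobs C false) (Aobs_sqr C false) hN htau.
Qed.

Lemma svet_trustedB_le4 (rB : 'M[C]_2) (Q : bool -> bool -> bool -> bool -> C) :
  is_state rB -> qcorr_with (MA C) Q ->
  svet (fun a b c x y z => \tr (MB C b y *m rB) * Q a c x z) <= 4.
Proof.
move=> hB [d [tau [N [htau [hN hQ]]]]].
rewrite (svet_trustedB_eq (fun b y => \tr (MB C b y *m rB)) Q) /= !hQ.
rewrite /MA /MB !mxtrace_proj_of_sub !mxtrace_kron_proj_of.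
have [rb0 rb1 hb] := bloch_ball_Bobs hB.
set g := fun (O : 'M[C]_2) z => \tr (kron O (N false z - N true z) *m tau).
apply: (@bloch_chsh_le4 _ _ _ (fun x z => g (Aobs C x) z)
  (fun k z => g (Bobs C (~~ k)) z)) => //.
- by move=> z; rewrite /g -mxtrace_mulDl -kronDl Aobs_add kronZl mxtrace_mulZl.
- by move=> z; rewrite /g -mxtrace_mulBl -kronBl Aobs_sub kronZl mxtrace_mulZl.
- by move=> k z; exact: qubit_correlator_bound (adj_Bobs C _) (Bobs_sqr C _) hN htau.
Qed.

Lemma svet_le4_of_StLHS (P : corr3 C) : StLHS P -> svet P <= 4.
Proof.
case=> n [r [p [q [rhoAB [rhoA [rhoB [Pc [QBC [QAC
  [hw [hsum [hst [hPc [hQ hP]]]]]]]]]]]]]].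
rewrite (eq_svet hP).
set T1 := fun l a b c x y z => \tr (kron (MA C a x) (MB C b y) *m rhoAB l) * Pc l c z.
set T2 := fun l a b c x y z => \tr (MA C a x *m rhoA l) * QBC l b c y z.
set T3 := fun l a b c x y z => \tr (MB C b y *m rhoB l) * QAC l a c x z.
have -> : svet (fun a b c x y z =>
    \sum_l r l * \tr (kron (MA C a x) (MB C b y) *m rhoAB l) * Pc l c z +
    \sum_l p l * \tr (MA C a x *m rhoA l) * QBC l b c y z +
    \sum_l q l * \tr (MB C b y *m rhoB l) * QAC l a c x z) =
  \sum_l svet (fun a b c x y z =>
    r l * T1 l a b c x y z + p l * T2 l a b c x y z + q l * T3 l a b c x y z).
  rewrite -svet_sum; apply: eq_svet => a b c x y z.
  by rewrite -!big_split; apply: eq_bigr => l _; rewrite /T1 /T2 /T3 !mulrA.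
apply: le_trans (_ : \sum_l (r l + p l + q l) * 4 <= 4); last by rewrite -mulr_suml hsum mul1r.
apply: ler_sum => l _; rewrite !svetD !svetZ !mulrDl.
have [r0 [p0 q0]] := hw l; have [s1 [s2 s3]] := hst l; have [q1 q2] := hQ l.
apply: lerD; [apply: lerD|]; apply: ler_wpM2l => //.
- exact: svet_local_le4.
- exact: svet_trustedA_le4.
- exact: svet_trustedB_le4.
Qed.

End ComponentBounds.

Section LHSModel.
Variable C : numClosedFieldType.
Local Notation sqrt2 := (sqrtC (2 : C)).

(* psi w = |00> + w |11>, unnormalised *)
Definition psi_coef (w : C) (i j : 'I_2) : C :=
  if i == j then (if i == ord0 then 1 else w) else 0.
Definition psi (w : C) : 'rV[C]_(2 * 2) := \row_k psi_coef w (pair_idx k).1 (pair_idx k).2.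
Definition noisy_state (t w : C) : 'M[C]_(2 * 2) :=
  ((1 - t) / 4) *: 1%:M + (t / 2) *: (adj (psi w) *m psi w).

Lemma psiE w i j : psi w 0 (mxvec_index i j) = psi_coef w i j.
Proof. by rewrite /psi mxE pair_idx_mxvec. Qed.

Lemma mxtrace_psi_gram w : \tr (adj (psi w) *m psi w) = 1 + w * w^*.
Proof.
rewrite mxtrace_mulC /mxtrace big_ord1 mxE big_mxvec_index !big_ord_recl !big_ord0.
by rewrite /adj !mxE !pair_idx_mxvec /psi_coef /= ?rmorph0 ?rmorph1; ring.
Qed.

Lemma noisy_state_is_state t w : 0 <= t -> t <= 1 -> w * w^* = 1 ->
  is_state (noisy_state t w).
Proof.
move=> t0 t1 hw; split.
  apply: psdD; apply: psdZ; rewrite ?psd1 ?psd_gram //.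
  - by apply: divr_ge0; rewrite ?subr_ge0 ?ler0n.
  - exact: psd1.
  - by apply: divr_ge0; rewrite ?ler0n.
  - exact: psd_gram.
by rewrite /noisy_state mxtraceD !mxtraceZ mxtrace1 mxtrace_psi_gram hw; field.
Qed.

Definition alpha (x : bool) : C := if x then - 'i else 1.
Definition beta (y : bool) : C := sqrt2^-1 * (if y then 1 - 'i else 1 + 'i).

Lemma mxtrace_kron_noisy t w a b x y : w != 0 -> w^* = w^-1 ->
  \tr (kron (MA C a x) (MB C b y) *m noisy_state t w) =
  4^-1 + t * ((-1) ^+ a * (-1) ^+ b) *
    (w^-1 * alpha x * beta y + w * (alpha x)^* * beta (~~ y)) / 8.
Proof.
move=> w0 wc.
rewrite /noisy_state mulmxDr mxtraceD -!scalemxAr !mxtraceZ mulmx1 mxtrace_kron.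
rewrite !mxtrace_proj_of ?mxtrace_Aobs ?mxtrace_Bobs //.
rewrite mulmxA mxtrace_mulC /mxtrace big_ord1 mxE big_mxvec_index.
under eq_bigr => i _ do under eq_bigr => j _ do rewrite [X in _ * X]mxE big_mxvec_index.
rewrite !big_ord_recl !big_ord0 /= !kronE !psiE /adj !mxE !pair_idx_mxvec /psi_coef /=.
case: x; case: y; rewrite /MA /MB /Bobs /proj_of /alpha /beta /= !mxE /=.
all: rewrite ?wc ?rmorph0 ?rmorph1 ?rmorphN /= ?conjCi ?opprK; field;
  by rewrite w0 sqrt2_neq0.
Qed.

Lemma one_pm_i_mul (y y' : bool) :
  (if y then 1 - 'i else 1 + 'i) * (if y' then 1 - 'i else 1 + 'i) =
  2 * (if y == y' then (if y then - 'i else 'i) else 1) :> C.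
Proof.
by case: y; case: y' => /=; rewrite !(mulrDl, mulrDr) !(mul1r, mulr1, mulNr, mulrN, opprK)
  -expr2 sqrCi; ring.
Qed.

Lemma beta_mul y y' : beta y * beta y' = if y == y' then (if y then - 'i else 'i) else 1.
Proof. by rewrite /beta mulrACA one_pm_i_mul mulrA invsqrt2_sqr mul1r. Qed.

Lemma conj_beta y : (beta y)^* = beta (~~ y).
Proof.
by case: y; rewrite /beta /= rmorphM /= conj_invsqrt2 ?rmorphB ?rmorphD /= rmorph1 conjCi ?opprK.
Qed.

(* <A_x (x) B_y> in the normalised pure state psi (beta d) / sqrt2 *)
Definition model_corr (d x y : bool) : C :=
  if d then (x != y)%:R else if x == y then (if x then -1 else 1) else 0.

Lemma beta_alpha_sum d x y :
  beta (~~ d) * alpha x * beta y + beta d * (alpha x)^* * beta (~~ y) = 2 * model_corr d x y.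
Proof.
have -> : beta (~~ d) * alpha x * beta y + beta d * (alpha x)^* * beta (~~ y) =
  alpha x * (beta (~~ d) * beta y) + (alpha x)^* * (beta d * beta (~~ y)) by ring.
rewrite !beta_mul /alpha /model_corr.
by case: d; case: x; case: y => /=; rewrite ?rmorph1 ?rmorphN /= ?conjCi ?opprK;
  rewrite ?mulr1 ?mul1r ?mulNr ?mulrN ?opprK -?expr2 ?sqrCi; ring.
Qed.

Definition phase (g d : bool) : C := (-1) ^+ g * beta d.

Lemma phase_mul_conj (g d : bool) : (-1) ^+ g * beta (~~ d) * phase g d = 1.
Proof.
have -> : (-1) ^+ g * beta (~~ d) * phase g d = ((-1) ^+ g) ^+ 2 * (beta (~~ d) * beta d).
  by rewrite /phase; ring.
by rewrite sqrr_sign mul1r beta_mul; case: d.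
Qed.

Lemma phase_neq0 (g d : bool) : phase g d != 0.
Proof.
by apply/eqP => e; move: (phase_mul_conj g d); rewrite e mulr0 => /eqP; rewrite eq_sym oner_eq0.
Qed.

Lemma phase_inv (g d : bool) : (phase g d)^-1 = (-1) ^+ g * beta (~~ d).
Proof. by rewrite -[RHS](mulfK (phase_neq0 g d)) phase_mul_conj mul1r. Qed.

Lemma conj_phase (g d : bool) : (phase g d)^* = (phase g d)^-1.
Proof.
rewrite phase_inv /phase rmorphM /= conj_beta; congr (_ * _).
by case: g; rewrite ?expr0 ?expr1 ?rmorph1 ?rmorphN /= ?rmorph1.
Qed.

Lemma mxtrace_kron_phase (t : C) (g d a b x y : bool) :
  \tr (kron (MA C a x) (MB C b y) *m noisy_state t (phase g d)) =
  4^-1 + t * ((-1) ^+ a * (-1) ^+ b) * ((-1) ^+ g * model_corr d x y) / 4.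
Proof.
rewrite mxtrace_kron_noisy ?phase_neq0 ?conj_phase // phase_inv /phase.
have -> : (-1) ^+ g * beta (~~ d) * alpha x * beta y +
    (-1) ^+ g * beta d * (alpha x)^* * beta (~~ y) =
  (-1) ^+ g * (beta (~~ d) * alpha x * beta y + beta d * (alpha x)^* * beta (~~ y)) by ring.
by rewrite beta_alpha_sum; field.
Qed.

Definition trivial_povm (c z : bool) : 'M[C]_1 := if c then 0 else 1%:M.

Lemma qcorr_with_trivial (M : bool -> bool -> 'M[C]_2) :
  qcorr_with M (fun s c t z =>
    \tr (kron (M s t) (trivial_povm c z) *m ((2%:R)^-1 *: (1%:M : 'M[C]_(2 * 1))))).
Proof.
exists 1%N, ((2%:R)^-1 *: 1%:M), trivial_povm; split; [|split] => //.
- exact: (is_state_scalar C 1).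
- split; first by move=> [] z; rewrite /trivial_povm; [exact: psd0 | exact: psd1].
  by move=> z; rewrite /trivial_povm addr0.
Qed.

(* hidden variable l = (g, d): phase (-1)^g beta d, Charlie outputs g xor (d && z) *)
Lemma StLHS_SvF V : 0 < V -> V <= sqrt2^-1 -> StLHS (SvF V).
Proof.
move=> V0 V1.
have t0 : 0 <= sqrt2 * V by rewrite mulr_ge0 ?ltW ?sqrt2_gt0.
have t1 : sqrt2 * V <= 1.
  by apply: le_trans (ler_wpM2l (ltW (sqrt2_gt0 C)) V1) _; rewrite mulfV ?sqrt2_neq0.
pose g (l : 'I_4) := (2 <= l)%N; pose d (l : 'I_4) := odd l.
pose rho12 := (2%:R)^-1 *: (1%:M : 'M[C]_(2 * 1)).
exists 4%N, (fun _ => 4^-1), (fun _ => 0), (fun _ => 0).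
exists (fun l => noisy_state (sqrt2 * V) (phase (g l) (d l))).
exists (fun _ => (2%:R)^-1 *: 1%:M), (fun _ => (2%:R)^-1 *: 1%:M).
exists (fun l c z => (c == g l (+) (d l && z))%:R).
exists (fun _ b c y z => \tr (kron (MB C b y) (trivial_povm c z) *m rho12)).
exists (fun _ a c x z => \tr (kron (MA C a x) (trivial_povm c z) *m rho12)).
split; [|split; [|split; [|split; [|split]]]].
- by move=> l; rewrite lexx invr_ge0 ler0n.
- by rewrite !big_ord_recl big_ord0 /=; field.
- move=> l; split; last by split; exact: (is_state_scalar C 1).
  by apply: noisy_state_is_state => //; rewrite conj_phase mulfV // phase_neq0.
- by move=> l z; case: (g l (+) (d l && z)); rewrite /= ?ler01 ?lexx ?add0r ?addr0.
- by move=> l; split; apply: qcorr_with_trivial.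
move=> a b c x y z.
rewrite !big_ord_recl !big_ord0 !mul0r !addr0 /= !mxtrace_kron_phase /g /d /SvF /=.
by case: a; case: b; case: c; case: x; case: y; case: z;
  rewrite /model_corr /= ?expr0 ?expr1; field.
Qed.

End LHSModel.

Theorem proposition1 (C : numClosedFieldType) (V : C) :
  0 < V -> V <= 1 ->
  (~ StLHS (SvF V) <-> (sqrtC 2)^-1 < V).
Proof.
move=> V0 _; have rV : V \is Num.real := gtr0_real V0.
have rs : (sqrtC (2 : C))^-1 \is Num.real by rewrite rpredV sqrt2_real.
split=> [noLHS | hV /svet_le4_of_StLHS].
- by rewrite real_ltNge //; apply/negP => /(StLHS_SvF V0).
- rewrite svet_SvF -mulrA => hle.
  suff h4 : 4 < 4 * (sqrtC 2 * V) by have := lt_le_trans h4 hle; rewrite ltxx.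
  move: hV; rewrite -(ltr_pM2l (sqrt2_gt0 C)) mulfV ?sqrt2_neq0 // => hV.
  by rewrite ltr_pMr ?ltr0n.
Qed.
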